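(* Let $N\ge 1$, let $\xi\in\mathbf{C}^*$, let $a_1,\dots,a_N\in\mathbf{C}^*$, and let $t_1,\dots,t_N\in\mathbf{C}$. On the phase space $M_{2N}=\Sigma_{t_1}\times\cdots\times\Sigma_{t_N}$ (notation in the context), let $\mathcal{T}(z)$ be the reflection monodromy matrix, $t(z)=\tfrac12\operatorname{tr}\mathcal{T}(z)$ the reflection transfer matrix, and $P_0,\dots,P_N$ the reflection Hamiltonians. Then $$\lim_{z\to 1}(z-z^{-1})\,t(z)=\sum_{j=0}^N P_j=(\xi-\xi^{-1})\prod_{k=1}^N\big(\omega_k-a_k^2-a_k^{-2}\big),$$ where $\omega_k=t_k$ is the value of the Casimir at site $k$.
   Context: $SL_2^*$ denotes the Poisson variety with coordinate ring $\mathbf{C}[e,f,k^{\pm1}]$ and Poisson brackets $\{k,e\}=ke$, $\{k,f\}=-kf$, $\{e,f\}=2(k^2-k^{-2})$. The function $\omega=k^2+k^{-2}+ef$ is a Casimir and $\Sigma_t=\{\omega=t\}$ is a (two-dimensional, for generic $t$) symplectic leaf. The phase space is $M_{2N}=\Sigma_{t_1}\times\cdots\times\Sigma_{t_N}$ with coordinates $(e_j,f_j,k_j)$ at site $j$ (functions at different sites Poisson commute), and $\omega_j=k_j^2+k_j^{-2}+e_jf_j=t_j$. Set $L_j(z)=\begin{pmatrix} zk_j-z^{-1}k_j^{-1} & e_j\\ f_j & zk_j^{-1}-z^{-1}k_j\end{pmatrix}$ and $K(z)=\begin{pmatrix}\xi z-z^{-1}\xi^{-1}&0\\0&\xi z^{-1}-z\xi^{-1}\end{pmatrix}$.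 The reflection monodromy matrix is $$\mathcal{T}(z)=\frac{1}{z-z^{-1}}L_1(a_1z)\cdots L_N(a_Nz)\,K(z)\,L_N(z/a_N)\cdots L_1(z/a_1)=\begin{pmatrix}A(z)&B(z)\\C(z)&D(z)\end{pmatrix},$$ and $t(z)=\frac12\operatorname{tr}\mathcal{T}(z)$. With $w=z^2$, the reflection Hamiltonians $P_0,\dots,P_N$ are the functions on $M_{2N}$ determined by the expansion $$t(z)=\frac12\Big(\frac{w+1}{w-1}\Big)\Big(P_N\frac{w^N+w^{-N}}{2}+P_{N-1}\frac{w^{N-1}+w^{1-N}}{2}+\cdots+P_1\frac{w+w^{-1}}{2}+P_0\Big).$$ *)

From HB Require Import structures.
From mathcomp Require Import all_boot all_order all_algebra.
From mathcomp Require Import all_classical all_reals all_analysis.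
From mathcomp Require Import complex.
Set Implicit Arguments. Unset Strict Implicit. Unset Printing Implicit Defensive.
Import Order.TTheory GRing.Theory Num.Theory.
Import numFieldTopology.Exports numFieldNormedType.Exports.
Local Open Scope ring_scope.
Local Open Scope complex_scope.

(* The complex numbers: C = R[i] for a real type R (e.g. the reals),
   seen as a numClosedFieldType so that it gets its (modulus) norm topology. *)
Definition C (R : realType) : numClosedFieldType := R[i].

Section Reflection.
Variable R : realType.
Local Notation C := (C R).

Definition Lax (e f k z : C) : 'M[C]_2 :=
  \matrix_(i < 2, j < 2)
    if (i == 0) && (j == 0) then z * k - z^-1 * k^-1
    else if (i == 0) && (j == 1) then e
    else if (i == 1) && (j == 0) then f
    else z * k^-1 - z^-1 * k.

Definition Kmat (xi z : C) : 'M[C]_2 :=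
  \matrix_(i < 2, j < 2)
    if (i == 0) && (j == 0) then xi * z - z^-1 * xi^-1
    else if (i == 1) && (j == 1) then xi * z^-1 - z * xi^-1
    else 0.

Definition monodromy (N : nat) (xi : C) (a e f k : 'I_N -> C) (z : C)
  : 'M[C]_2 :=
  (z - z^-1)^-1 *:
   ((\prod_(j < N) Lax (e j) (f j) (k j) (a j * z)) * Kmat xi z *
    (\prod_(j < N) Lax (e (rev_ord j)) (f (rev_ord j)) (k (rev_ord j))
                       (z / a (rev_ord j)))).

Definition transfer (N : nat) (xi : C) (a e f k : 'I_N -> C) (z : C) : C :=
  2^-1 * \tr (monodromy xi a e f k z).

Definition casimir (e f k : C) : C := k ^+ 2 + k ^- 2 + e * f.

(* The values P_0..P_N satisfy the defining expansion of the reflection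
   Hamiltonians at the given point: for all z with z != 0, z^2 != 1, w = z^2,
   t(z) = 1/2 (w+1)/(w-1) (sum_j P_j (w^j + w^-j)/2)
   (for j = 0 the term (w^0 + w^0)/2 = 1, i.e. the term P_0). *)
Definition reflection_hamiltonians (N : nat) (xi : C) (a e f k : 'I_N -> C)
  (P : 'I_N.+1 -> C) : Prop :=
  forall z : C, z != 0 -> z ^+ 2 != 1 ->
    let w := z ^+ 2 in
    transfer xi a e f k z =
      2^-1 * ((w + 1) / (w - 1)) *
      \sum_(j < N.+1) P j * ((w ^+ j + w ^- j) / 2).

End Reflection.

(* Both sides are the limit at z = 1 of (z - z^-1) t(z), computed in two ways.
   Near 1 (z != 0, z^2 != 1) the defining expansion of the P_j writes this function
   as a Laurent polynomial in z, continuous at 1 with value P_0 + ... + P_N.  It is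
   also half the trace of the product L_1(a_1 z) ... L_N(a_N z) K(z) L_N(z/a_N) ...
   L_1(z/a_1), whose entries are continuous at 1; at z = 1 that product telescopes
   from the middle outwards, because K(1) = (xi - xi^-1) Id and
   L_j(a_j) L_j(a_j^-1) = (omega_j - a_j^2 - a_j^-2) Id.  Limits in C are unique. *)

From HB Require Import structures.
From mathcomp Require Import all_boot all_order all_algebra.
From mathcomp Require Import all_classical all_reals all_analysis.
From mathcomp Require Import complex.
From mathcomp Require Import ring.
Set Implicit Arguments. Unset Strict Implicit. Unset Printing Implicit Defensive.
Import Order.TTheory GRing.Theory Num.Theory.
Import numFieldTopology.Exports numFieldNormedType.Exports.
Local Open Scope ring_scope.
Local Open Scope complex_scope.
Local Open Scope classical_set_scope.

Section continuity_at.
Context {K : numFieldType} {T : topologicalType} (x : T).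

Lemma continuous_sum {V : normedModType K} (I : Type) (r : seq I) (P : pred I)
    (F : I -> T -> V) :
  (forall i, P i -> {for x, continuous (F i)}) ->
  {for x, continuous (fun y => \sum_(i <- r | P i) F i y)}.
Proof.
move=> cF; rewrite -fct_sumE.
apply: (big_ind (fun f => {for x, continuous f})) => //; first exact: cvg_cst.
by move=> f g; apply: continuousD.
Qed.

Lemma continuousX (f : T -> K) n :
  {for x, continuous f} -> {for x, continuous (fun y => f y ^+ n)}.
Proof.
move=> cf; elim: n => [|n IH].
  by rewrite (_ : (fun y => _) = cst 1); [exact: cvg_cst | apply/funext => y; rewrite expr0].
rewrite (_ : (fun y => _) = f \* (fun y => f y ^+ n)); first exact: continuousM.
by apply/funext => y; rewrite exprS.
Qed.

Lemma continuous_if (b : bool) (f g : T -> K) :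
  {for x, continuous f} -> {for x, continuous g} ->
  {for x, continuous (fun y => if b then f y else g y)}.
Proof. by case: b. Qed.

Definition entrywise_continuous m n (M : T -> 'M[K]_(m, n)) :=
  forall i j, {for x, continuous (fun y => M y i j)}.

Lemma entrywise_continuous_mul m n p (A : T -> 'M[K]_(m, n)) (B : T -> 'M[K]_(n, p)) :
  entrywise_continuous A -> entrywise_continuous B ->
  entrywise_continuous (fun y => A y *m B y).
Proof.
move=> cA cB i j; rewrite (_ : (fun y => _) = fun y => \sum_(k < n) A y i k * B y k j).
  by apply: continuous_sum => k _; apply: continuousM.
by apply/funext => y; rewrite mxE.
Qed.

Lemma entrywise_continuous_prod n (I : Type) (r : seq I) (P : pred I)
    (F : I -> T -> 'M[K]_n.+1) :
  (forall i, P i -> entrywise_continuous (F i)) ->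
  entrywise_continuous (fun y => \prod_(i <- r | P i) F i y).
Proof.
move=> cF; rewrite -fct_prodE.
apply: (big_ind (@entrywise_continuous _ _)) => //.
  by move=> i j; exact: cvg_cst.
by move=> A B cA cB; exact: entrywise_continuous_mul.
Qed.

Lemma continuous_mxtrace n (M : T -> 'M[K]_n) :
  entrywise_continuous M -> {for x, continuous (fun y => \tr (M y))}.
Proof. by move=> cM; apply: continuous_sum => i _; exact: cM. Qed.

End continuity_at.

Lemma cvg_dnbhs_near_continuous {T U : topologicalType} (x : T) (f g : T -> U) :
  {near x^', g =1 f} -> {for x, continuous g} -> f @ x^' --> g x.
Proof. by move=> gf cg; apply: cvg_trans (near_eq_cvg gf) (cvg_within_filter _ cg). Qed.

Lemma near1_dnbhs_sqr_neq1 (K : numFieldType) :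
  \forall z \near (1 : K)^', z != 0 /\ z ^+ 2 != 1.
Proof.
have near_neq0 (f : K -> K) : {for 1, continuous f} -> f 1 != 0 ->
    \forall z \near (1 : K)^', f z != 0.
  by move=> cf f1; exact: nbhs_dnbhs (cvgr_neq0 _ cf f1).
have z1 : \forall z \near (1 : K)^', z + 1 != 0.
  apply: (near_neq0 (fun z => z + 1)).
    exact: (cvgD (@cvg_id _ (nbhs (1 : K))) (cvg_cst (1 : K))).
  by rewrite -[1 + 1]/(2%:R) pnatr_eq0.
near=> z; split.
  by near: z; apply: (near_neq0 (fun z => z)); [exact: cvg_id | exact: oner_neq0].
rewrite -subr_eq0 subr_sqr_1 mulf_neq0 //; last by near: z.
by rewrite subr_eq0; near: z; exact: nbhs_dnbhs_neq.
Unshelve. all: by end_near.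
Qed.

Lemma subr_inv_neq0 (K : fieldType) (z : K) : z != 0 -> z ^+ 2 != 1 -> z - z^-1 != 0.
Proof.
move=> z0 z2; rewrite subr_eq0; apply: contraNneq z2 => zV.
by rewrite expr2 {1}zV mulVf.
Qed.

Lemma prod_scalar_prod_rev (R : comPzRingType) m n (A B : 'I_n -> 'M[R]_m.+1)
    (d : 'I_n -> R) (c : R) :
  (forall j, A j * B j = (d j)%:M) ->
  (\prod_(j < n) A j) * c%:M * (\prod_(j < n) B (rev_ord j)) = (c * \prod_(j < n) d j)%:M.
Proof.
elim: n A B d c => [|n IH] A B d c ABd; first by rewrite !big_ord0 !mulr1 mul1r.
have rev_lift (j : 'I_n) : rev_ord (lift ord0 j) = widen_ord (leqnSn n) (rev_ord j).
  by apply: val_inj; rewrite /= /bump leq0n ?add1n ?subSS.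
have rev0 : rev_ord ord0 = ord_max :> 'I_n.+1 by apply: val_inj; rewrite /= subn1.
have prodB : \prod_(j < n.+1) B (rev_ord j) =
    B ord_max * \prod_(j < n) B (widen_ord (leqnSn n) (rev_ord j)).
  by rewrite big_ord_recl rev0; congr (_ * _); apply: eq_bigr => j _; rewrite rev_lift.
rewrite prodB big_ord_recr [in RHS]big_ord_recr /=.
have -> : (\prod_(j < n) A (widen_ord (leqnSn n) j)) * A ord_max * c%:M *
    (B ord_max * \prod_(j < n) B (widen_ord (leqnSn n) (rev_ord j))) =
    (\prod_(j < n) A (widen_ord (leqnSn n) j)) * (c * d ord_max)%:M *
    (\prod_(j < n) B (widen_ord (leqnSn n) (rev_ord j))).
  rewrite -!mulrA; congr (_ * _); rewrite !mulrA; congr (_ * _).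
  by rewrite -mulmxE scalar_mxC mulmxE -mulrA ABd -mulmxE -scalar_mxM.
rewrite (IH (fun j => A (widen_ord _ j)) (fun j => B (widen_ord _ j))
  (fun j => d (widen_ord _ j))) => [|j]; last exact: ABd.
by rewrite mulrAC mulrA.
Qed.

Section lax.
Variable R : realType.
Local Notation C := (C R).

Lemma Lax_mul_inv (e f k b : C) : b != 0 -> k != 0 ->
  Lax e f k b * Lax e f k b^-1 = (casimir e f k - b ^+ 2 - b ^- 2)%:M.
Proof.
move=> b0 k0; apply/matrixP => i j; rewrite -mulmxE !mxE.
rewrite big_ord_recr big_ord1 !mxE /casimir.
by case: i => [[|[|?]] ?]; case: j => [[|[|?]] ?] //=; field; rewrite b0 k0.
Qed.

Lemma Kmat1 (xi : C) : Kmat xi 1 = (xi - xi^-1)%:M.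
Proof.
apply/matrixP => i j; rewrite !mxE invr1.
by case: i => [[|[|?]] ?]; case: j => [[|[|?]] ?] //=; ring.
Qed.

Section entrywise_continuity.
Variables (T : topologicalType) (x : T) (u : T -> C).
Hypotheses (cu : {for x, continuous u}) (ux0 : u x != 0).

Let cuV : {for x, continuous (fun y => (u y)^-1)}.
Proof. exact: (continuousV (s := u) ux0 cu). Qed.

Lemma entrywise_continuous_Lax (e f k : C) :
  entrywise_continuous x (fun y => Lax e f k (u y)).
Proof.
move=> i j; have -> : (fun y => Lax e f k (u y) i j) = fun y =>
    if (i == 0) && (j == 0) then u y * k - (u y)^-1 * k^-1
    else if (i == 0) && (j == 1) then e
    else if (i == 1) && (j == 0) then f
    else u y * k^-1 - (u y)^-1 * k by apply/funext => y; rewrite mxE.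
have cst_cont (c : C) : {for x, continuous (fun=> c)} by exact: cvg_cst.
apply: continuous_if.
  exact: continuousB (continuousM cu (cst_cont _)) (continuousM cuV (cst_cont _)).
apply: continuous_if; first exact: cst_cont.
apply: continuous_if; first exact: cst_cont.
exact: continuousB (continuousM cu (cst_cont _)) (continuousM cuV (cst_cont _)).
Qed.

Lemma entrywise_continuous_Kmat (xi : C) :
  entrywise_continuous x (fun y => Kmat xi (u y)).
Proof.
move=> i j; have -> : (fun y => Kmat xi (u y) i j) = fun y =>
    if (i == 0) && (j == 0) then xi * u y - (u y)^-1 * xi^-1
    else if (i == 1) && (j == 1) then xi * (u y)^-1 - u y * xi^-1
    else 0 by apply/funext => y; rewrite mxE.
have cst_cont (c : C) : {for x, continuous (fun=> c)} by exact: cvg_cst.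
apply: continuous_if.
  exact: continuousB (continuousM (cst_cont _) cu) (continuousM cuV (cst_cont _)).
apply: continuous_if; last exact: cst_cont.
exact: continuousB (continuousM (cst_cont _) cuV) (continuousM cu (cst_cont _)).
Qed.

End entrywise_continuity.

End lax.

Section reflection.
Variables (R : realType) (N : nat) (xi : C R) (a e f k : 'I_N -> C R).
Local Notation C := (C R).

Definition reflection_product (z : C) : 'M[C]_2 :=
  (\prod_(j < N) Lax (e j) (f j) (k j) (a j * z)) * Kmat xi z *
  (\prod_(j < N) Lax (e (rev_ord j)) (f (rev_ord j)) (k (rev_ord j))
                     (z / a (rev_ord j))).

Lemma reflection_product1 : (forall j, a j != 0) -> (forall j, k j != 0) ->
  reflection_product 1 =
  ((xi - xi^-1) * \prod_(j < N) (casimir (e j) (f j) (k j) - a j ^+ 2 - a j ^- 2))%:M.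
Proof.
move=> a0 k0; rewrite /reflection_product Kmat1.
under eq_bigr do rewrite mulr1.
under [X in _ * X]eq_bigr do rewrite div1r.
apply: (prod_scalar_prod_rev (A := fun j => Lax (e j) (f j) (k j) (a j))
  (B := fun j => Lax (e j) (f j) (k j) (a j)^-1)) => j.
exact: Lax_mul_inv.
Qed.

Lemma scaled_transfer_reflection_product (z : C) : z - z^-1 != 0 ->
  (z - z^-1) * transfer xi a e f k z = 2^-1 * \tr (reflection_product z).
Proof. by move=> z0; rewrite /transfer /monodromy mxtraceZ mulrCA mulVKf. Qed.


Lemma entrywise_continuous_reflection_product (z0 : C) :
  z0 != 0 -> (forall j, a j != 0) ->
  entrywise_continuous z0 reflection_product.
Proof.
move=> z00 a0.
have c_id : {for z0, continuous (fun z : C => z)} := cvg_id.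
have cst_cont (c : C) : {for z0, continuous (fun=> c)} := @cst_continuous _ _ c z0.
have cL := entrywise_continuous_prod (r := index_enum 'I_N) (P := xpredT) (fun j _ =>
  entrywise_continuous_Lax (e := e j) (f := f j) (k := k j)
    (continuousM (cst_cont (a j)) c_id) (mulf_neq0 (a0 j) z00)).
have cR := entrywise_continuous_prod (r := index_enum 'I_N) (P := xpredT) (fun j _ =>
  entrywise_continuous_Lax (e := e (rev_ord j)) (f := f (rev_ord j)) (k := k (rev_ord j))
    (continuousM c_id (cst_cont (a (rev_ord j))^-1))
    (mulf_neq0 z00 (invr_neq0 (a0 (rev_ord j))))).
exact: entrywise_continuous_mul
  (entrywise_continuous_mul cL (entrywise_continuous_Kmat (xi := xi) c_id z00)) cR.
Qed.

Lemma continuous_half_trace_reflection_product (z0 : C) :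
  z0 != 0 -> (forall j, a j != 0) ->
  {for z0, continuous (fun z => 2^-1 * \tr (reflection_product z))}.
Proof.
move=> z00 a0; apply: continuousM; first exact: (@cst_continuous _ _ (2^-1 : C) z0).
exact/continuous_mxtrace/entrywise_continuous_reflection_product.
Qed.

(* (z - z^-1) (w + 1) / (w - 1) = (w + 1) / z for w = z^2 *)
Definition hamiltonian_series (P : 'I_N.+1 -> C) (z : C) : C :=
  2^-1 * (z ^+ 2 + 1) * z^-1 *
  \sum_(j < N.+1) P j * (((z ^+ 2) ^+ j + (z ^+ 2) ^- j) / 2).

Lemma scaled_transfer_hamiltonian (P : 'I_N.+1 -> C) (z : C) :
  reflection_hamiltonians xi a e f k P -> z != 0 -> z ^+ 2 != 1 ->
  (z - z^-1) * transfer xi a e f k z = hamiltonian_series P z.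
Proof.
move=> hamP z0 z2; rewrite (hamP z z0 z2) /hamiltonian_series.
have z21 : z ^+ 2 - 1 != 0 by rewrite subr_eq0.
by set s := \sum_(j < N.+1) _; field; rewrite z21 z0.
Qed.

Lemma continuous_hamiltonian_series (P : 'I_N.+1 -> C) (z0 : C) :
  z0 != 0 -> {for z0, continuous (hamiltonian_series P)}.
Proof.
move=> z00; have c_id : {for z0, continuous (fun z : C => z)} := cvg_id.
have cst_cont (c : C) : {for z0, continuous (fun=> c)} := @cst_continuous _ _ c z0.
have c_sqr : {for z0, continuous (fun z : C => z ^+ 2)} := continuousX (n := 2) c_id.
have c_pow j : {for z0, continuous (fun z : C => z ^+ 2 ^+ j)} :=
  continuousX (n := j) c_sqr.
have c_powV j : {for z0, continuous (fun z : C => z ^+ 2 ^- j)} :=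
  continuousV (s := fun z : C => z ^+ 2 ^+ j) (expf_neq0 _ (expf_neq0 _ z00)) (c_pow j).
apply: continuousM.
  apply: continuousM; last exact: (continuousV (s := fun z : C => z) z00 c_id).
  exact: continuousM (cst_cont _) (continuousD c_sqr (cst_cont 1)).
apply: continuous_sum => j _; apply: continuousM; first exact: cst_cont.
apply: continuousM; last exact: cst_cont.
exact: continuousD (c_pow j) (c_powV j).
Qed.

Lemma hamiltonian_series1 (P : 'I_N.+1 -> C) :
  hamiltonian_series P 1 = \sum_(j < N.+1) P j.
Proof.
rewrite /hamiltonian_series !expr1n invr1 mulr1.
have two0 : (2 : C) != 0 by rewrite pnatr_eq0.
rewrite (_ : 2^-1 * (1 + 1) = 1) ?mul1r; last by rewrite -[1 + 1]/(2%:R) mulVf.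
by apply: eq_bigr => j _; rewrite expr1n invr1 -[1 + 1]/(2%:R) mulfV // mulr1.
Qed.

End reflection.

Theorem mainTheorem1 (R : realType) (N : nat) (xi : C R) (a : 'I_N -> C R)
  (t : 'I_N -> C R) (e f k : 'I_N -> C R) (P : 'I_N.+1 -> C R) :
  (1 <= N)%N -> xi != 0 -> (forall j, a j != 0) ->
  (forall j, k j != 0) -> (forall j, casimir (e j) (f j) (k j) = t j) ->
  reflection_hamiltonians xi a e f k P ->
  ((fun z : C R => (z - z^-1) * transfer xi a e f k z) @ (1 : C R)^'
     --> \sum_(j < N.+1) P j)
  /\ \sum_(j < N.+1) P j
     = (xi - xi^-1) * \prod_(j < N) (t j - a j ^+ 2 - a j ^- 2).
Proof.
move=> _ _ a0 k0 casimir_t hamP.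
set g := fun z : C R => (z - z^-1) * transfer xi a e f k z.
have one0 : (1 : C R) != 0 := oner_neq0 _.
have g_ham : g @ (1 : C R)^' --> hamiltonian_series P 1.
  apply: cvg_dnbhs_near_continuous; last exact: continuous_hamiltonian_series.
  near=> z; have [z0 z2] : z != 0 /\ z ^+ 2 != 1 by near: z; exact: near1_dnbhs_sqr_neq1.
  by rewrite /g /= (scaled_transfer_hamiltonian hamP z0 z2).
have g_refl : g @ (1 : C R)^' --> 2^-1 * \tr (reflection_product xi a e f k 1).
  apply: (@cvg_dnbhs_near_continuous _ _ _ _
    (fun z => 2^-1 * \tr (reflection_product xi a e f k z))).
    near=> z; have [z0 z2] : z != 0 /\ z ^+ 2 != 1 by near: z; exact: near1_dnbhs_sqr_neq1.
    by rewrite /g /= scaled_transfer_reflection_product // subr_inv_neq0.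
  exact: continuous_half_trace_reflection_product.
rewrite hamiltonian_series1 in g_ham; split => //.
have -> : \sum_(j < N.+1) P j = 2^-1 * \tr (reflection_product xi a e f k 1).
  exact: cvg_unique _ g_ham g_refl.
rewrite reflection_product1 // mxtrace_scalar -[in X in 2^-1 * X]mulr_natl.
rewrite mulKf ?pnatr_eq0 //.
by congr (_ * _); apply: eq_bigr => j _; rewrite casimir_t.
Unshelve. all: by end_near.
Qed.
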